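(* Consider the two-dimensional control system $$\dot x_1=\theta_1x_1^3+\theta_2x_1^2+\theta_3x_2,\qquad \dot x_2=\theta_4x_2^3+\theta_5x_2^2+\theta_6x_1,$$ with control $\theta\in\mathbb R^6$. For every positive integer $N$ and every data $(x_i,y_i)_{i=1}^N$ in $\mathbb R^2\times\mathbb R^2$ such that $x_1,\dots,x_N$ are pairwise distinct and non-zero and $y_1,\dots,y_N$ are pairwise distinct and non-zero, there is a flow map $\varphi$ of the system (a finite composition of flows with piecewise constant controls) with $\varphi(x_i)=y_i$ for all $i$.
   Context: For a vector field $g$ obtained by fixing $\theta$, $\varphi^g_t$ is the time-$t$ flow of $\dot x=g(x)$; flow maps of the system are compositions $\varphi^{g_k}_{t_k}\circ\cdots\circ\varphi^{g_1}_{t_1}$ with $t_i\ge0$, each defined (for these locally Lipschitz fields) on the relevant points for the times used. *)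

From Stdlib Require Import Reals List.
From Coquelicot Require Import Coquelicot.
Open Scope R_scope.

Record control := mkControl
  { th1 : R; th2 : R; th3 : R; th4 : R; th5 : R; th6 : R }.

Definition field1 (th : control) (x1 x2 : R) : R :=
  th1 th * x1 ^ 3 + th2 th * x1 ^ 2 + th3 th * x2.
Definition field2 (th : control) (x1 x2 : R) : R :=
  th4 th * x2 ^ 3 + th5 th * x2 ^ 2 + th6 th * x1.

(* flow_step th t p q : the time-t flow of x' = g_theta(x) is defined at p
   (on [0,t]) and sends p to q, i.e. there is a solution curve
   (gamma1, gamma2) on [0,t] starting at p and ending at q.
   (By local Lipschitz continuity solutions are unique, so this relation is
   the graph of the flow map phi^{g_theta}_t.) *)
Definition flow_step (th : control) (t : R) (p q : R * R) : Prop :=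
  exists g1 g2 : R -> R,
    g1 0 = fst p /\ g2 0 = snd p /\ g1 t = fst q /\ g2 t = snd q /\
    forall s, 0 <= s <= t ->
      is_derive g1 s (field1 th (g1 s) (g2 s)) /\
      is_derive g2 s (field2 th (g1 s) (g2 s)).

Fixpoint flow_comp (steps : list (control * R)) (p q : R * R) : Prop :=
  match steps with
  | nil => p = q
  | (th, t) :: rest => exists z, flow_step th t p z /\ flow_comp rest z q
  end.

From Stdlib Require Import Reals List Lra Lia.
From Coquelicot Require Import Coquelicot.
Open Scope R_scope.

(* Two elementary flows suffice, together with their mirror images under (x1, x2) <-> (x2, x1):
   the shear x1' = a x2 (control theta3) and the Riccati flow x2' = d x2^2 (control theta5),
   whose time-1 map is x2 |-> x2 / (1 - d x2).  Conjugating the shear by the Riccati flow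
   gives x1 |-> x1 + a x2 / (1 - d x2), so x1 can be shifted by any finite combination of
   the hyperbolas u / (1 - d u) evaluated at x2, with x2 fixed.  By partial fractions these
   combinations include functions with arbitrarily prescribed non-zero zeros, hence they
   interpolate arbitrary values at finitely many distinct non-zero nodes.  A generic shear makes the
   second coordinates of the x_i distinct and non-zero; one then moves the first
   coordinates, then the second ones, to those of a generically sheared copy of the y_i,
   and finally undoes that shear. *)

Definition swap (p : R * R) : R * R := (snd p, fst p).

Definition swap_control (th : control) : control :=
  mkControl (th4 th) (th5 th) (th6 th) (th1 th) (th2 th) (th3 th).

Lemma flow_step_swap th t p q :
  flow_step th t p q -> flow_step (swap_control th) t (swap p) (swap q).
Proof.
  intros (g1 & g2 & H1 & H2 & H3 & H4 & Hder).
  exists g2, g1; simpl; do 4 (split; [assumption|]).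
  intros s Hs; split; apply Hder; exact Hs.
Qed.

Lemma flow_comp_swap steps p q :
  flow_comp steps p q ->
  flow_comp (map (fun st => (swap_control (fst st), snd st)) steps) (swap p) (swap q).
Proof.
  revert p; induction steps as [|[th t] steps IH]; simpl; intros p H.
  - now subst.
  - destruct H as (z & Hz & Hrest).
    exists (swap z); split; [apply flow_step_swap | apply IH]; assumption.
Qed.

Lemma flow_comp_app s1 s2 p q r :
  flow_comp s1 p q -> flow_comp s2 q r -> flow_comp (s1 ++ s2) p r.
Proof.
  revert p; induction s1 as [|[th t] s1 IH]; simpl; intros p H1 H2.
  - now subst.
  - destruct H1 as (z & Hz & Hrest). exists z; split; [assumption | eapply IH; eauto].
Qed.

Definition is_flow_map_on (D : R * R -> Prop) (f : R * R -> R * R) : Prop :=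
  exists steps : list (control * R),
    List.Forall (fun st => 0 <= snd st) steps /\ forall p, D p -> flow_comp steps p (f p).

Lemma is_flow_map_on_id D : is_flow_map_on D (fun p => p).
Proof. exists nil; split; [constructor | reflexivity]. Qed.

Lemma is_flow_map_on_sub D E f g :
  (forall p, D p -> E p) -> (forall p, D p -> f p = g p) ->
  is_flow_map_on E f -> is_flow_map_on D g.
Proof.
  intros HDE Hfg (steps & Ht & Hf). exists steps; split; [assumption|].
  intros p Hp. rewrite <- Hfg by assumption. auto.
Qed.

Lemma is_flow_map_on_comp D E f g :
  is_flow_map_on D f -> is_flow_map_on E g -> (forall p, D p -> E (f p)) ->
  is_flow_map_on D (fun p => g (f p)).
Proof.
  intros (s1 & Ht1 & Hf) (s2 & Ht2 & Hg) HDE.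
  exists (s1 ++ s2); split.
  - apply Forall_app; split; assumption.
  - intros p Hp. eapply flow_comp_app; eauto.
Qed.

Lemma is_flow_map_on_swap D f :
  is_flow_map_on D f ->
  is_flow_map_on (fun p => D (swap p)) (fun p => swap (f (swap p))).
Proof.
  intros (steps & Ht & Hf).
  exists (map (fun st => (swap_control (fst st), snd st)) steps); split.
  - apply Forall_map. exact Ht.
  - intros [p1 p2] Hp. exact (flow_comp_swap _ _ _ (Hf _ Hp)).
Qed.

Lemma is_flow_map_on_step D th t f :
  0 <= t -> (forall p, D p -> flow_step th t p (f p)) -> is_flow_map_on D f.
Proof.
  intros Ht Hf. exists ((th, t) :: nil); split.
  - constructor; [exact Ht | constructor].
  - intros p Hp. exists (f p); split; [auto | reflexivity].
Qed.

Definition shear1 (a : R) (p : R * R) : R * R := (fst p + a * snd p, snd p).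
Definition shear2 (b : R) (p : R * R) : R * R := (fst p, snd p + b * fst p).

Lemma flow_step_shear1 a p : flow_step (mkControl 0 0 a 0 0 0) 1 p (shear1 a p).
Proof.
  exists (fun s => fst p + a * s * snd p), (fun _ => snd p).
  unfold shear1, field1, field2; simpl.
  split; [ring|]. split; [reflexivity|]. split; [ring|]. split; [reflexivity|].
  intros s _; split; auto_derive; auto; ring.
Qed.

Lemma is_flow_map_shear1 D a : is_flow_map_on D (shear1 a).
Proof. eapply (is_flow_map_on_step D _ 1); [lra | intros; apply flow_step_shear1]. Qed.

Lemma is_flow_map_shear2 D b : is_flow_map_on D (shear2 b).
Proof.
  apply (is_flow_map_on_sub D (fun _ => True) (fun p => swap (shear1 b (swap p)))).
  - trivial.
  - reflexivity.
  - apply (is_flow_map_on_swap (fun _ => True)), is_flow_map_shear1.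
Qed.

Definition hyperbola (d u : R) : R := u / (1 - d * u).

Lemma flow_step_riccati2 d p :
  d * snd p < 1 ->
  flow_step (mkControl 0 0 0 0 d 0) 1 p (fst p, hyperbola d (snd p)).
Proof.
  destruct p as [p1 u]; simpl; intros Hdu.
  exists (fun _ => p1), (fun s => hyperbola (d * s) u); unfold hyperbola.
  split; [reflexivity|]. split; [simpl; field; lra|].
  split; [reflexivity|]. split; [simpl; f_equal; ring|].
  intros s Hs.
  assert (Hpos : 0 < 1 - d * s * u) by (destruct (Rle_lt_dec (d * u) 0); nra).
  unfold field1, field2; simpl; split.
  - auto_derive; auto; ring.
  - auto_derive; [lra | field; lra].
Qed.

Lemma is_flow_map_hyperbolic_shear1 a d :
  is_flow_map_on (fun p => d * snd p < 1)
    (fun p => (fst p + a * hyperbola d (snd p), snd p)).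
Proof.
  set (ric := fun d (p : R * R) => (fst p, hyperbola d (snd p))).
  apply (is_flow_map_on_sub _ (fun p => d * snd p < 1)
           (fun p => ric (- d) (shear1 a (ric d p)))); [trivial| |].
  - intros [p1 u] Hdu; simpl in *. unfold ric, shear1, hyperbola; simpl.
    f_equal. field. split; lra.
  - apply (is_flow_map_on_comp _ (fun p => - d * snd p < 1));
      [apply (is_flow_map_on_comp _ (fun _ => True)) | |].
    + eapply is_flow_map_on_step; [|intros p Hp; apply flow_step_riccati2, Hp]; lra.
    + apply is_flow_map_shear1.
    + trivial.
    + eapply is_flow_map_on_step; [|intros p Hp; apply flow_step_riccati2, Hp]; lra.
    + intros [p1 u] Hdu; simpl in *. unfold hyperbola.
      replace (- d * (u / (1 - d * u))) with (1 - / (1 - d * u)) by (field; lra).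
      assert (0 < / (1 - d * u)) by (apply Rinv_0_lt_compat; lra). lra.
Qed.

Definition hyp_comb (L : list (R * R)) (u : R) : R :=
  fold_right (fun q acc => fst q * hyperbola (snd q) u + acc) 0 L.

Lemma is_flow_map_comb_shear1 L :
  is_flow_map_on (fun p => List.Forall (fun q => snd q * snd p < 1) L)
    (fun p => (fst p + hyp_comb L (snd p), snd p)).
Proof.
  induction L as [|[a d] L IH]; simpl.
  - apply (is_flow_map_on_sub _ _ (fun p => p) _ (fun _ H => H)); [|apply is_flow_map_on_id].
    intros [p1 u] _; simpl; f_equal; ring.
  - set (h := fun p : R * R => (fst p + a * hyperbola d (snd p), snd p)).
    set (D := fun p : R * R => List.Forall (fun q => snd q * snd p < 1) ((a, d) :: L)).
    assert (Hh : is_flow_map_on D h).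
    { apply (is_flow_map_on_sub D (fun p => d * snd p < 1) h h);
        [|reflexivity|apply is_flow_map_hyperbolic_shear1].
      intros p Hp; inversion Hp; assumption. }
    apply (is_flow_map_on_sub _ D (fun p => (fst (h p) + hyp_comb L (snd (h p)), snd (h p))));
      [trivial | intros p _; simpl; f_equal; ring |].
    apply (is_flow_map_on_comp _ _ _ _ Hh IH).
    intros p Hp; inversion Hp; assumption.
Qed.

Lemma is_flow_map_comb_shear2 L :
  is_flow_map_on (fun p => List.Forall (fun q => snd q * fst p < 1) L)
    (fun p => (fst p, snd p + hyp_comb L (fst p))).
Proof.
  apply is_flow_map_on_sub with
    (E := fun p => List.Forall (fun q => snd q * snd (swap p) < 1) L)
    (f := fun p => swap ((fun p => (fst p + hyp_comb L (snd p), snd p)) (swap p)));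
    [intros p Hp; exact Hp | reflexivity |].
  exact (is_flow_map_on_swap _ _ (is_flow_map_comb_shear1 L)).
Qed.

Definition scale_comb (k : R) (L : list (R * R)) : list (R * R) :=
  map (fun q => (k * fst q, snd q)) L.

Lemma hyp_comb_app L1 L2 u : hyp_comb (L1 ++ L2) u = hyp_comb L1 u + hyp_comb L2 u.
Proof. induction L1 as [|q L1 IH]; simpl; [|rewrite IH]; ring. Qed.

Lemma hyp_comb_scale k L u : hyp_comb (scale_comb k L) u = k * hyp_comb L u.
Proof. induction L as [|q L IH]; simpl; [|rewrite IH]; ring. Qed.

(* Partial fractions: [u / ((1 - d u) (1 - c u))] is a combination of the hyperbolas
   with poles [c] and [d]. *)
Definition div_pole (c : R) (L : list (R * R)) : list (R * R) :=
  flat_map (fun q =>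
    (fst q * c / (c - snd q), c) :: (- fst q * snd q / (c - snd q), snd q) :: nil) L.

Lemma hyp_comb_div_pole c L u :
  1 - c * u <> 0 ->
  List.Forall (fun q => snd q <> c /\ 1 - snd q * u <> 0) L ->
  hyp_comb (div_pole c L) u = hyp_comb L u / (1 - c * u).
Proof.
  intros Hc HL; induction HL as [|[a d] L [Hdc Hdu] _ IH]; simpl in *.
  - field; exact Hc.
  - rewrite IH; unfold hyperbola; field.
    repeat split; try assumption. intro E; apply Hdc; lra.
Qed.

Lemma one_sub_mul_pos r d w : 0 <= d <= r -> r * Rabs w < 1 -> 0 < 1 - d * w.
Proof. intros Hd Hw. pose proof (Rle_abs w); pose proof (Rabs_pos w); nra. Qed.

Lemma exists_hyp_comb_mul_factor L c e r :
  0 < e < r -> List.Forall (fun q => e < snd q < r) L ->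
  exists L', List.Forall (fun q => e <= snd q < r) L' /\
    forall w, r * Rabs w < 1 -> hyp_comb L' w = hyp_comb L w * ((w - c) / (1 - e * w)).
Proof.
  intros He HL.
  exists (scale_comb (-1 / e) L ++ scale_comb (1 / e - c) (div_pole e L)); split.
  - apply Forall_app; split; unfold scale_comb; apply Forall_map.
    + eapply Forall_impl; [|exact HL]; simpl; intros q Hq; lra.
    + apply Forall_flat_map; eapply Forall_impl; [|exact HL].
      intros q Hq; repeat constructor; simpl; lra.
  - intros w Hw.
    assert (Hew : 0 < 1 - e * w) by (apply (one_sub_mul_pos r); lra).
    rewrite hyp_comb_app, !hyp_comb_scale, hyp_comb_div_pole.
    + field; lra.
    + lra.
    + eapply Forall_impl; [|exact HL]; intros q Hq.
      pose proof (one_sub_mul_pos r (snd q) w); split; lra.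
Qed.

Lemma Rdiv_eq_0_iff x y : y <> 0 -> x / y = 0 <-> x = 0.
Proof.
  intros Hy; split; intros E; [|rewrite E; apply Rdiv_0_l].
  replace x with (x / y * y) by (field; exact Hy). rewrite E; ring.
Qed.

(* The combination is [w * prod_(j<k) (w - u j) / prod_(j<=k) (1 - c_j w)],
   built one factor at a time. *)
Lemma exists_hyp_comb_with_zeros (u : nat -> R) r k e :
  0 < e < r ->
  exists L, List.Forall (fun q => e <= snd q < r) L /\
    forall w, r * Rabs w < 1 ->
      (hyp_comb L w = 0 <-> w = 0 \/ exists j, (j < k)%nat /\ w = u j).
Proof.
  revert e; induction k as [|k IH]; intros e He.
  - exists ((1, e) :: nil); split; [constructor; [simpl; lra | constructor]|].
    intros w Hw; simpl; unfold hyperbola.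
    assert (Hew : 0 < 1 - e * w) by (apply (one_sub_mul_pos r); lra).
    rewrite Rmult_1_l, Rplus_0_r, Rdiv_eq_0_iff by lra.
    split; [now left | intros [E | (j & Hj & _)]; [exact E | lia]].
  - destruct (IH ((e + r) / 2) ltac:(lra)) as (L & HL & HZ).
    destruct (exists_hyp_comb_mul_factor L (u k) e r) as (L' & HL' & Hfactor);
      [lra | eapply Forall_impl; [|exact HL]; simpl; intros q Hq; lra|].
    exists L'; split; [exact HL'|].
    intros w Hw; rewrite (Hfactor w Hw).
    assert (Hew : 0 < 1 - e * w) by (apply (one_sub_mul_pos r); lra).
    transitivity (hyp_comb L w = 0 \/ w - u k = 0).
    { rewrite <- (Rdiv_eq_0_iff (w - u k) (1 - e * w)) by lra.
      split; [apply Rmult_integral | apply Rmult_eq_0_compat]. }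
    rewrite (HZ w Hw); split.
    + intros [[E | (j & Hj & E)] | E]; [now left | |].
      * right; exists j; split; [lia | exact E].
      * right; exists k; split; [lia | lra].
    + intros [E | (j & Hj & E)]; [now left; left|].
      destruct (Nat.eq_dec j k) as [-> | Hjk]; [right; lra|].
      left; right; exists j; split; [lia | exact E].
Qed.

Lemma exists_hyp_comb_interpolating (u v : nat -> R) r n :
  0 < r ->
  (forall i, (i < n)%nat -> r * Rabs (u i) < 1) ->
  (forall i, (i < n)%nat -> u i <> 0) ->
  (forall i j, (i < n)%nat -> (j < n)%nat -> i <> j -> u i <> u j) ->
  exists L, List.Forall (fun q => 0 < snd q < r) L /\
    forall i, (i < n)%nat -> hyp_comb L (u i) = v i.
Proof.
  intros Hr; induction n as [|n IH]; intros Hsmall Hnz Hinj.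
  - exists nil; split; [constructor | intros; lia].
  - destruct IH as (L & HL & HLv).
    { intros i Hi; apply Hsmall; lia. }
    { intros i Hi; apply Hnz; lia. }
    { intros i j Hi Hj; apply Hinj; lia. }
    destruct (exists_hyp_comb_with_zeros u r n (r / 2)) as (F & HF & HFzero); [lra|].
    set (f := hyp_comb F (u n)).
    assert (Hf : f <> 0).
    { intros E; apply (HFzero _ (Hsmall n ltac:(lia))) in E.
      destruct E as [E | (j & Hj & E)].
      - exact (Hnz n ltac:(lia) E).
      - exact (Hinj n j ltac:(lia) ltac:(lia) ltac:(lia) E). }
    exists (L ++ scale_comb ((v n - hyp_comb L (u n)) / f) F); split.
    + apply Forall_app; split; [exact HL|].
      apply Forall_map; eapply Forall_impl; [|exact HF]; simpl; intros q Hq; lra.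
    + intros i Hi; rewrite hyp_comb_app, hyp_comb_scale.
      destruct (Nat.eq_dec i n) as [-> | Hin].
      * fold f; field; exact Hf.
      * assert (Hi' : (i < n)%nat) by lia.
        rewrite (HLv i Hi'), (proj2 (HFzero _ (Hsmall i ltac:(lia)))); [ring|].
        right; exists i; split; [exact Hi' | reflexivity].
Qed.

Lemma exists_inv_bound (u : nat -> R) n :
  exists r, 0 < r /\ forall i, (i < n)%nat -> r * Rabs (u i) < 1.
Proof.
  induction n as [|n (r & Hr & Hsmall)].
  - exists 1; split; [lra | intros; lia].
  - set (s := / (Rabs (u n) + 1)).
    assert (Hs : 0 < s) by (apply Rinv_0_lt_compat; pose proof (Rabs_pos (u n)); lra).
    exists (Rmin r s); split; [now apply Rmin_pos|].
    intros i Hi; pose proof (Rmin_l r s); pose proof (Rmin_r r s);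
      pose proof (Rmin_pos r s Hr Hs); pose proof (Rabs_pos (u i)).
    destruct (Nat.eq_dec i n) as [-> | Hin].
    + assert (s * (Rabs (u n) + 1) = 1) by (unfold s; field; lra). nra.
    + assert (r * Rabs (u i) < 1) by (apply Hsmall; lia). nra.
Qed.

Lemma hyp_comb_interpolation (u v : nat -> R) n :
  (forall i, (i < n)%nat -> u i <> 0) ->
  (forall i j, (i < n)%nat -> (j < n)%nat -> i <> j -> u i <> u j) ->
  exists L, List.Forall (fun q => forall i, (i < n)%nat -> snd q * u i < 1) L /\
    forall i, (i < n)%nat -> hyp_comb L (u i) = v i.
Proof.
  intros Hnz Hinj.
  destruct (exists_inv_bound u n) as (r & Hr & Hsmall).
  destruct (exists_hyp_comb_interpolating u v r n) as (L & HL & HLv); try assumption.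
  exists L; split; [|exact HLv].
  eapply Forall_impl; [|exact HL]; intros q Hq i Hi.
  pose proof (one_sub_mul_pos r (snd q) (u i) ltac:(lra) (Hsmall i Hi)); lra.
Qed.

Lemma filter_forall_lt {T : Type} {F : (T -> Prop) -> Prop} {FF : Filter F}
  n (P : nat -> T -> Prop) :
  (forall k, (k < n)%nat -> F (P k)) -> F (fun x => forall k, (k < n)%nat -> P k x).
Proof.
  induction n as [|n IH]; intros HP.
  - apply filter_forall; intros x k Hk; lia.
  - apply (filter_imp (fun x => P n x /\ forall k, (k < n)%nat -> P k x)).
    + intros x [Hn Hlt] k Hk.
      destruct (Nat.eq_dec k n) as [-> | Hkn]; [exact Hn | apply Hlt; lia].
    + apply filter_and; [apply HP; lia | apply IH; intros k Hk; apply HP; lia].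
Qed.

Lemma affine_eventually_neq0 s t :
  ~ (s = 0 /\ t = 0) -> Rbar_locally p_infty (fun b => s + b * t <> 0).
Proof.
  intros Hst; destruct (Req_dec t 0) as [-> | Ht].
  - exists 0; intros b _ E; apply Hst; split; [lra | reflexivity].
  - exists (- s / t); intros b Hb E.
    assert (b = - s / t) by (field_simplify_eq; lra). lra.
Qed.

Lemma exists_separating_combination N (s t : nat -> R) :
  (forall i, (i < N)%nat -> ~ (s i = 0 /\ t i = 0)) ->
  (forall i j, (i < N)%nat -> (j < N)%nat -> i <> j -> ~ (s i = s j /\ t i = t j)) ->
  exists b, (forall i, (i < N)%nat -> s i + b * t i <> 0) /\
    (forall i j, (i < N)%nat -> (j < N)%nat -> i <> j -> s i + b * t i <> s j + b * t j).
Proof.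
  intros Hnz Hinj.
  assert (Hev : Rbar_locally p_infty (fun b =>
      (forall i, (i < N)%nat -> s i + b * t i <> 0) /\
      (forall i, (i < N)%nat -> forall j, (j < N)%nat -> i <> j ->
         s i + b * t i <> s j + b * t j))).
  { apply filter_and; apply filter_forall_lt; intros i Hi.
    - apply affine_eventually_neq0, Hnz, Hi.
    - apply filter_forall_lt; intros j Hj.
      destruct (Nat.eq_dec i j) as [Hij | Hij].
      + apply filter_forall; intros b E; contradiction.
      + apply (filter_imp (fun b => (s i - s j) + b * (t i - t j) <> 0)).
        * intros b Hb _ E; apply Hb; lra.
        * apply affine_eventually_neq0; intros [E1 E2].
          apply (Hinj i j Hi Hj Hij); split; lra. }
  destruct Hev as (B & HB); destruct (HB (B + 1)) as [Hb0 Hbinj]; [lra|].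
  exists (B + 1); split; [exact Hb0 | intros i j Hi Hj; apply Hbinj; assumption].
Qed.

Definition reachable (N : nat) (x y : nat -> R * R) : Prop :=
  exists steps : list (control * R),
    List.Forall (fun st => 0 <= snd st) steps /\
    forall i, (i < N)%nat -> flow_comp steps (x i) (y i).

Lemma reachable_trans N x y z : reachable N x y -> reachable N y z -> reachable N x z.
Proof.
  intros (s1 & Ht1 & H1) (s2 & Ht2 & H2); exists (s1 ++ s2); split.
  - apply Forall_app; split; assumption.
  - intros i Hi; eapply flow_comp_app; auto.
Qed.

Lemma reachable_of_flow_map N x y D f :
  is_flow_map_on D f -> (forall i, (i < N)%nat -> D (x i) /\ f (x i) = y i) ->
  reachable N x y.
Proof.
  intros (steps & Ht & Hf) Hxy; exists steps; split; [exact Ht|].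
  intros i Hi; destruct (Hxy i Hi) as [HD <-]; auto.
Qed.

Lemma reachable_change_fst N x y :
  (forall i, (i < N)%nat -> snd (x i) = snd (y i)) ->
  (forall i, (i < N)%nat -> snd (x i) <> 0) ->
  (forall i j, (i < N)%nat -> (j < N)%nat -> i <> j -> snd (x i) <> snd (x j)) ->
  reachable N x y.
Proof.
  intros Hsnd Hnz Hinj.
  destruct (hyp_comb_interpolation (fun i => snd (x i)) (fun i => fst (y i) - fst (x i)) N Hnz Hinj)
    as (L & HL & HLv).
  apply (reachable_of_flow_map _ _ _ _ _ (is_flow_map_comb_shear1 L)); intros i Hi; split.
  - eapply Forall_impl; [|exact HL]; intros q Hq; apply Hq, Hi.
  - apply injective_projections; simpl; [rewrite HLv by exact Hi; ring | apply Hsnd, Hi].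
Qed.

Lemma reachable_change_snd N x y :
  (forall i, (i < N)%nat -> fst (x i) = fst (y i)) ->
  (forall i, (i < N)%nat -> fst (x i) <> 0) ->
  (forall i j, (i < N)%nat -> (j < N)%nat -> i <> j -> fst (x i) <> fst (x j)) ->
  reachable N x y.
Proof.
  intros Hfst Hnz Hinj.
  destruct (hyp_comb_interpolation (fun i => fst (x i)) (fun i => snd (y i) - snd (x i)) N Hnz Hinj)
    as (L & HL & HLv).
  apply (reachable_of_flow_map _ _ _ _ _ (is_flow_map_comb_shear2 L)); intros i Hi; split.
  - eapply Forall_impl; [|exact HL]; intros q Hq; apply Hq, Hi.
  - apply injective_projections; simpl; [apply Hfst, Hi | rewrite HLv by exact Hi; ring].
Qed.

Theorem lemma3p16 (N : nat) (x y : nat -> R * R) :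
  (0 < N)%nat ->
  (forall i j, (i < N)%nat -> (j < N)%nat -> i <> j -> x i <> x j) ->
  (forall i j, (i < N)%nat -> (j < N)%nat -> i <> j -> y i <> y j) ->
  (forall i, (i < N)%nat -> x i <> (0, 0)) ->
  (forall i, (i < N)%nat -> y i <> (0, 0)) ->
  exists steps : list (control * R),
    List.Forall (fun st => 0 <= snd st) steps /\
    forall i, (i < N)%nat -> flow_comp steps (x i) (y i).
Proof.
  intros _ Hx Hy Hx0 Hy0; change (reachable N x y).
  destruct (exists_separating_combination N (fun i => snd (x i)) (fun i => fst (x i)))
    as (b & Hb0 & Hbinj).
  { intros i Hi [E2 E1]; apply (Hx0 i Hi), injective_projections; assumption. }
  { intros i j Hi Hj Hij [E2 E1]; apply (Hx i j Hi Hj Hij), injective_projections; assumption. }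
  destruct (exists_separating_combination N (fun i => fst (y i)) (fun i => snd (y i)))
    as (a & Ha0 & Hainj).
  { intros i Hi [E1 E2]; apply (Hy0 i Hi), injective_projections; assumption. }
  { intros i j Hi Hj Hij [E1 E2]; apply (Hy i j Hi Hj Hij), injective_projections; assumption. }
  set (u := fun i => snd (x i) + b * fst (x i)).
  set (w := fun i => fst (y i) + a * snd (y i)).
  apply (reachable_trans _ _ (fun i => (fst (x i), u i))).
  { apply (reachable_of_flow_map _ _ _ (fun _ => True) (shear2 b));
      [apply is_flow_map_shear2 | auto]. }
  apply (reachable_trans _ _ (fun i => (w i, u i))).
  { apply reachable_change_fst; simpl; auto. }
  apply (reachable_trans _ _ (fun i => (w i, snd (y i)))).
  { apply reachable_change_snd; simpl; auto. }
  apply (reachable_of_flow_map _ _ _ (fun _ => True) (shear1 (- a))); [apply is_flow_map_shear1|].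
  intros i _; split; [trivial|].
  unfold shear1, w; simpl; apply injective_projections; simpl; ring.
Qed.
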